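(* Let $L$ be a finite lattice. If $L$ is shellable, then its facet adjacency graph $FA(L)$ does not have two disjoint source sets.
   Context: The order complex of $L$ has the chains of $L$ as faces; $L$ is shellable if its facets (maximal chains) admit a linear order $F_1,\dots,F_k$ such that for each $j<k$, $\big(\bigcup_{i\le j}\langle F_i\rangle\big)\cap\langle F_{j+1}\rangle$ is pure of dimension $|F_{j+1}|-2$, with $\langle F\rangle$ the set of subsets of $F$. The facet adjacency graph $FA(L)$ is the directed graph whose vertices are the maximal chains of $L$, with an edge $F\to G$ whenever $|F\cap G|=|G|-1$. A source set of a directed graph with vertex set $V$ is a nonempty proper subset $X\subsetneq V$ such that there is no edge $y\to x$ with $y\notin X$ and $x\in X$. *)

From HB Require Import structures.
From mathcomp Require Import all_boot all_order.
Set Implicit Arguments. Unset Strict Implicit. Unset Printing Implicit Defensive.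
Import Order.LTheory.
Local Open Scope order_scope.

Section Defs.
Context {d : Order.disp_t} {L : finLatticeType d}.

Definition is_chain (A : {set L}) : bool :=
  [forall x in A, forall y in A, (x <= y) || (y <= x)].

(* Facets of the order complex = maximal chains (w.r.t. inclusion). *)
Definition maximal_chain (A : {set L}) : bool :=
  is_chain A && [forall B : {set L}, (is_chain B && (A \subset B)) ==> (B == A)].

(* Pure simplicial complex (given as a predicate on faces) whose maximal
   faces all have exactly n vertices (i.e. dimension n - 1). *)
Definition pure_of_size (C : pred {set L}) (n : nat) : Prop :=
  forall S, C S -> (forall S', C S' -> S \subset S' -> S' = S) -> #|S| = n.

(* (U_{i <= j} <F_i>) ∩ <F_{j+1}>, with facets F_1,...,F_k listed (0-indexed) in s *)
Definition shell_complex (s : seq {set L}) (j : nat) : pred {set L} :=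
  fun S => (S \subset nth set0 s j.+1) && has (fun F : {set L} => S \subset F) (take j.+1 s).

Definition shelling (s : seq {set L}) : Prop :=
  [/\ uniq s,
      (forall F, F \in s <-> maximal_chain F) &
      forall j, (j.+1 < size s)%N ->
        pure_of_size (shell_complex s j) (#|nth set0 s j.+1|.-1)].

Definition shellable : Prop := exists s, shelling s.

Definition FA_edge (F G : {set L}) : bool :=
  [&& maximal_chain F, maximal_chain G & #|F :&: G|.+1 == #|G|].

Definition source_set (X : {set {set L}}) : Prop :=
  [/\ (forall F, F \in X -> maximal_chain F),
      X != set0,
      (exists F, maximal_chain F && (F \notin X)) &
      forall y x, x \in X -> y \notin X -> ~~ FA_edge y x].

End Defs.

From HB Require Import structures.
From mathcomp Require Import all_boot all_order zify.

Set Implicit Arguments.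
Unset Strict Implicit.
Unset Printing Implicit Defensive.

(* In a shelling F_0, F_1, ..., each F_(j+1) meets the earlier facets in a pure
   complex of codimension one, so some earlier F_i shares all but one element
   with F_(j+1): FA(L) has an edge F_i -> F_(j+1).  Hence every facet is reached
   from F_0 by a path of edges, and a source set, being closed under taking
   in-neighbours, contains F_0. *)

Section PredecessorClosed.
Variables (T : eqType) (e : rel T) (x0 : T) (s : seq T).

Hypothesis edge_from_earlier : forall j, j.+1 < size s ->
  exists2 i, i <= j & e (nth x0 s i) (nth x0 s j.+1).

Lemma predecessor_closed_mem_head (X : pred T) x :
  (forall y z, z \in X -> e y z -> y \in X) ->
  x \in s -> x \in X -> nth x0 s 0 \in X.
Proof.
move=> closedX xs; rewrite -(nth_index x0 xs); have := index_mem x s; rewrite xs.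
elim/ltn_ind: (index x s) => [[|j] IH] // js jX.
have [i le_ij ij] := edge_from_earlier js.
exact: IH i le_ij (leq_ltn_trans le_ij (ltnW js)) (closedX _ _ jX ij).
Qed.

End PredecessorClosed.

Section Shelling.
Context {d : Order.disp_t} {L : finLatticeType d}.
Implicit Types (F G S : {set L}) (s : seq {set L}).

Lemma maximal_chain_subset F G :
  maximal_chain F -> is_chain G -> F \subset G -> G = F.
Proof. by case/andP=> _ /forallP maxF chG FG; apply/eqP; move: (maxF G); rewrite chG FG. Qed.

Lemma card_setI_maximal_chain F G :
  maximal_chain F -> maximal_chain G -> F != G -> #|F :&: G| < #|G|.
Proof.
move=> mF mG neFG; apply: proper_card; rewrite properEneq subsetIr andbT.
apply: contra neFG => /eqP/setIidPr GF.
by rewrite (maximal_chain_subset mG (proj1 (andP mF)) GF).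
Qed.

Lemma shelling_memE s F : shelling s -> (F \in s) = maximal_chain F.
Proof. by case=> _ memS _; apply/idP/idP => /memS. Qed.

Lemma shell_complex_set0 s j : j.+1 < size s -> shell_complex s j set0.
Proof.
move=> js; rewrite /shell_complex sub0set; apply/hasP; exists (nth set0 s 0).
  by rewrite -(nth_take _ (ltn0Sn j)) mem_nth // size_take js.
exact: sub0set.
Qed.

Lemma shelling_edge_from_earlier s : shelling s -> forall j, j.+1 < size s ->
  exists2 i, i <= j & FA_edge (nth set0 s i) (nth set0 s j.+1).
Proof.
move=> shs j js; have [uniq_s _ pure_s] := shs.
have mnth k : k < size s -> maximal_chain (nth set0 s k).
  by move=> ks; rewrite -(shelling_memE _ shs) mem_nth.
(* A face of maximum size is inclusion-maximal, so purity fixes its size. *)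
case: (arg_maxnP (fun S => #|S|) (shell_complex_set0 js)) => S shS maxS.
have cardS : #|S| = #|nth set0 s j.+1|.-1.
  apply: (pure_s j js S shS) => S' shS' SS'.
  by apply/eqP; rewrite eq_sym eqEcard SS'; exact: maxS.
case/andP: shS => S_Fj /hasP[F /(nthP set0)[i i_take <-{F}] S_Fi].
rewrite size_take js in i_take; rewrite nth_take // in S_Fi.
have i_s : i < size s := ltn_trans i_take js.
exists i => //; rewrite /FA_edge !mnth //=.
have neq_ij : nth set0 s i != nth set0 s j.+1.
  by rewrite nth_uniq // neq_ltn i_take.
have lt_cap := card_setI_maximal_chain (mnth _ i_s) (mnth _ js) neq_ij.
have le_cap : #|S| <= #|nth set0 s i :&: nth set0 s j.+1|.
  by apply: subset_leq_card; rewrite subsetI S_Fi S_Fj.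
rewrite cardS in le_cap; move: lt_cap le_cap.
by move: #|_ :&: _| #|nth set0 s j.+1| => a b; lia.
Qed.

Lemma source_set_head s X : shelling s -> source_set X -> nth set0 s 0 \in X.
Proof.
move=> shs [mX /set0Pn[F FX] _ noedge].
have closedX G H : H \in X -> FA_edge G H -> G \in X.
  by move=> HX; apply: contraLR => GX; apply: noedge.
apply: (predecessor_closed_mem_head (shelling_edge_from_earlier shs) closedX _ FX).
by rewrite shelling_memE // mX.
Qed.

End Shelling.

Theorem lemma3p30 (d : Order.disp_t) (L : finLatticeType d) :
  @shellable d L ->
  ~ (exists X Y : {set {set L}},
        source_set X /\ source_set Y /\ [disjoint X & Y]).
Proof.
move=> [s shs] [X [Y [sX [sY dXY]]]].
have /negP := disjointFr dXY (source_set_head shs sX).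
by rewrite source_set_head.
Qed.
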